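(* Let $K$ be a field, $m\ge2$, $d_1,\ldots,d_m$ positive integers, $S=K[x_1,\ldots,x_m,y_1,\ldots,y_m]$, and $I_2(D)\subset S$ the ideal generated by the $2$-minors of $D=\begin{pmatrix}x_1^{d_1}&\cdots&x_m^{d_m}\\ y_1^{d_1}&\cdots&y_m^{d_m}\end{pmatrix}$. For $1\le i<j\le m$ let $f_{ij}=x_i^{d_i}y_j^{d_j}-x_j^{d_j}y_i^{d_i}$. Then for any term order $\prec$ on $S$, the reduced Gröbner basis of $I_2(D)$ with respect to $\prec$ is $\mathcal{G}=\{f_{ij}:1\le i<j\le m\}$. *)

From HB Require Import structures.
From mathcomp Require Import all_boot all_order all_algebra.
From mathcomp Require Import mpoly.
Set Implicit Arguments. Unset Strict Implicit. Unset Printing Implicit Defensive.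
Import GRing.Theory.
Local Open Scope ring_scope.

Section Groebner.
Variables (n : nat) (K : fieldType).

(* A term order on monomials 'X_{1..n}, given by its strict relation [lt]:
   a strict total order, compatible with multiplication of monomials,
   with 1 (= mnm0) the least monomial (hence a well-order, by Dickson). *)
Definition term_order (lt : rel 'X_{1..n}) : Prop :=
  [/\ (forall a, ~~ lt a a),
      (forall a b c, lt a b -> lt b c -> lt a c),
      (forall a b, a != b -> lt a b || lt b a),
      (forall a b c, lt a b -> lt (mnm_add a c) (mnm_add b c))
    & (forall a, a != mnm0 -> lt mnm0 a)].

(* leading monomial: the lt-largest monomial of the support (mnm0 for p = 0) *)
Definition lmon (lt : rel 'X_{1..n}) (p : {mpoly K[n]}) : 'X_{1..n} :=
  foldr (fun a b => if lt b a then a else b) mnm0 (msupp p).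

Definition lcoef (lt : rel 'X_{1..n}) (p : {mpoly K[n]}) : K :=
  p@_(lmon lt p).

Definition in_ideal (gens : seq {mpoly K[n]}) (p : {mpoly K[n]}) : Prop :=
  exists cs : seq {mpoly K[n]},
    size cs = size gens /\ p = \sum_(k < size gens) cs`_k * gens`_k.

Definition is_groebner (lt : rel 'X_{1..n}) (I : {mpoly K[n]} -> Prop)
    (G : seq {mpoly K[n]}) : Prop :=
  (forall g, g \in G -> I g) /\
  (forall f, I f -> f != 0 ->
     exists2 g, g \in G & (g != 0) && lem (lmon lt g) (lmon lt f)).

Definition is_reduced_groebner (lt : rel 'X_{1..n}) (I : {mpoly K[n]} -> Prop)
    (G : seq {mpoly K[n]}) : Prop :=
  [/\ is_groebner lt I G,
      (forall g, g \in G -> lcoef lt g = 1)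
    & (forall g g', g \in G -> g' \in G -> g != g' ->
         forall mo, mo \in msupp g' -> ~~ lem (lmon lt g) mo)].
End Groebner.

Section Binomial.
Variables (m : nat) (K : fieldType) (d : 'I_m -> nat).

Definition xv (i : 'I_m) : {mpoly K[m + m]} := 'X_(lshift m i).
Definition yv (i : 'I_m) : {mpoly K[m + m]} := 'X_(rshift m i).

Definition Dmat : 'M[{mpoly K[m + m]}]_(2, m) :=
  \matrix_(a < 2, j < m) (if a == 0 then xv j ^+ d j else yv j ^+ d j).

Definition minor2 (i j : 'I_m) : {mpoly K[m + m]} :=
  \det (\matrix_(a < 2, b < 2) Dmat a (if b == 0 then i else j)).

Definition minors2 : seq {mpoly K[m + m]} :=
  [seq minor2 ij.1 ij.2 | ij <- [seq ij : 'I_m * 'I_m <- [seq (i, j) | i <- enum 'I_m, j <- enum 'I_m] | (ij.1 < ij.2)%N]].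

Definition I2D (p : {mpoly K[m + m]}) : Prop := in_ideal minors2 p.

Definition fij (i j : 'I_m) : {mpoly K[m + m]} :=
  xv i ^+ d i * yv j ^+ d j - xv j ^+ d j * yv i ^+ d i.

Definition fij_monic (lt : rel 'X_{1..m + m}) (i j : 'I_m) : {mpoly K[m + m]} :=
  (lcoef lt (fij i j))^-1 *: fij i j.

Definition Gset (lt : rel 'X_{1..m + m}) : seq {mpoly K[m + m]} :=
  [seq fij_monic lt ij.1 ij.2 | ij <- [seq ij : 'I_m * 'I_m <- [seq (i, j) | i <- enum 'I_m, j <- enum 'I_m] | (ij.1 < ij.2)%N]].
End Binomial.

From HB Require Import structures.
From mathcomp Require Import all_boot all_order all_algebra.
From mathcomp Require Import bigenough ssrcomplements mpoly zify.
Set Implicit Arguments. Unset Strict Implicit. Unset Printing Implicit Defensive.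
Import GRing.Theory BigEnough.
Local Open Scope ring_scope.

(* The ideal I_2(D) is generated by the binomials f_ab, so every element of it
   has coefficient sum zero on each fiber of any map on monomials that is
   invariant under exchanging x_a^(d a) y_b^(d b) for x_b^(d b) y_a^(d a);
   [fiber] is such a map.  Say that a leads b when x_a^(d a) y_b^(d b) is the
   leading monomial of f_ab: this is a strict total order on the indices.  A
   monomial divisible by no such leading monomial is "standard", and it is the
   least monomial of its fiber: exchanging a leading monomial for the other
   monomial of f_ab lowers the monomial and decreases a potential built from
   the ranks of the order "leads", and two standard monomials of one fiber
   coincide because their x-block counts cannot cross.  So the leading
   monomial of a nonzero element f of the ideal is not standard, for it would
   otherwise be alone in its fiber among the monomials of f and carry a
   nonzero coefficient sum.  Hence the monic f_ab form a Groebner basis, which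
   is visibly reduced; and a reduced Groebner basis is unique. *)

Section TermOrder.
Variables (n : nat) (lt : rel 'X_{1..n}).
Hypothesis lt_term : term_order lt.

Lemma term_ltxx a : ~~ lt a a. Proof. by case: lt_term. Qed.

Lemma term_lt_trans a b c : lt a b -> lt b c -> lt a c.
Proof. by case: lt_term => _ + _ _ _; apply. Qed.

Lemma term_lt_total a b : a != b -> lt a b || lt b a.
Proof. by case: lt_term => _ _ + _ _; apply. Qed.

Lemma term_lt0m a : a != 0%MM -> lt 0%MM a.
Proof. by case: lt_term => _ _ _ _; apply. Qed.

Lemma term_lt_asym a b : lt a b -> ~~ lt b a.
Proof. by move=> ab; apply/negP => /(term_lt_trans ab); apply/negP/term_ltxx. Qed.

Lemma term_ltD2r c a b : lt (a + c)%MM (b + c)%MM = lt a b.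
Proof.
have ltD2r x y : lt x y -> lt (x + c)%MM (y + c)%MM by case: lt_term => _ _ _ + _; apply.
apply/idP/idP => [ac_bc|]; last exact: ltD2r.
have [eq_ab|/term_lt_total/orP[//|ba]] := eqVneq a b.
  by move: ac_bc; rewrite eq_ab (negbTE (term_ltxx _)).
by move: (term_lt_asym ac_bc); rewrite ltD2r.
Qed.

Lemma lem_term_le a b : lem a b -> a = b \/ lt a b.
Proof.
move=> ab; rewrite -(submK ab).
have [->|ne0] := eqVneq (b - a)%MM 0%MM; first by left; rewrite add0m.
by right; rewrite -{1}[a]add0m term_ltD2r term_lt0m.
Qed.

Definition term_max (s : seq 'X_{1..n}) : 'X_{1..n} :=
  foldr (fun a b => if lt b a then a else b) 0%MM s.

Lemma term_max_ge s mu : mu \in s -> mu = term_max s \/ lt mu (term_max s).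
Proof.
elim: s => // a s IHs; rewrite inE /= -/(term_max s).
case: ifP => [lt_ma|nlt_ma] /orP[/eqP->|/IHs mu_le]; first by left.
- by right; case: mu_le => [->//|lt_mu]; apply: term_lt_trans lt_mu lt_ma.
- have [->|/term_lt_total] := eqVneq a (term_max s); first by left.
  by rewrite nlt_ma orbF; right.
- exact: mu_le.
Qed.

Lemma term_max_mem s : s != [::] -> term_max s \in s.
Proof.
elim: s => // a s IHs _; rewrite /= -/(term_max s) inE.
case: ifP => [_|nlt_ma]; first by rewrite eqxx.
have [s0|s_nil] := eqVneq s [::]; last by rewrite IHs ?orbT.
move: nlt_ma; rewrite s0 /=.
by have [->|/term_lt0m ->] := eqVneq a 0%MM; rewrite ?eqxx.
Qed.

Lemma lem_anti (a b : 'X_{1..n}) : lem a b -> lem b a -> a = b.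
Proof.
by move=> /mnm_lepP ab /mnm_lepP ba; apply/mnmP => i; apply/eqP; rewrite eqn_leq ab ba.
Qed.

End TermOrder.

Section LeadingMonomial.
Variables (n : nat) (K : fieldType) (lt : rel 'X_{1..n}).
Hypothesis lt_term : term_order lt.
Implicit Types (p : {mpoly K[n]}) (a b mu nu : 'X_{1..n}).

Lemma msupp_le_lmon p mu : mu \in msupp p -> mu = lmon lt p \/ lt mu (lmon lt p).
Proof. exact: term_max_ge. Qed.

Lemma lmon_msupp p : p != 0 -> lmon lt p \in msupp p.
Proof. by rewrite -msupp_eq0; apply: term_max_mem. Qed.

Lemma lmon_eq p mu : mu \in msupp p ->
  (forall nu, nu \in msupp p -> nu = mu \/ lt nu mu) -> lmon lt p = mu.
Proof.
move=> mu_p mu_max; have [->//|lt_mu] := msupp_le_lmon mu_p.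
have p_neq0 : p != 0 by apply: contraTneq mu_p => ->; rewrite msupp0.
case: (mu_max _ (lmon_msupp p_neq0)) => // lt_lmon.
by move: (term_lt_asym lt_term lt_lmon); rewrite lt_mu.
Qed.

Lemma lcoef_eq1_neq0 p : lcoef lt p = 1 -> p != 0.
Proof. by apply: contra_eq_neq => ->; rewrite /lcoef mcoeff0 eq_sym oner_eq0. Qed.

Lemma lmonZ c p : c != 0 -> lmon lt (c *: p) = lmon lt p.
Proof.
move=> c_neq0; have [->|p_neq0] := eqVneq p 0; first by rewrite scaler0.
have msuppZ mu : (mu \in msupp (c *: p)) = (mu \in msupp p).
  by rewrite !mcoeff_msupp mcoeffZ mulf_eq0 negb_or c_neq0.
apply: lmon_eq; first by rewrite msuppZ lmon_msupp.
by move=> nu; rewrite msuppZ; apply: msupp_le_lmon.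
Qed.

Lemma lcoefZ c p : c != 0 -> lcoef lt (c *: p) = c * lcoef lt p.
Proof. by move=> c_neq0; rewrite /lcoef lmonZ // mcoeffZ. Qed.

Lemma lcoefN p : lcoef lt (- p) = - lcoef lt p.
Proof. by rewrite -scaleN1r lcoefZ ?oppr_eq0 ?oner_eq0 // mulN1r. Qed.

Lemma msupp_binomial a b : a != b ->
  msupp ('X_[a] - 'X_[b] : {mpoly K[n]}) =i [:: a; b].
Proof.
move=> a_neq_b mu; rewrite mcoeff_msupp mcoeffB !mcoeffX !inE.
have [->|_] := eqVneq mu a; first by rewrite (eq_sym b a) (negbTE a_neq_b) subr0 oner_eq0.
by have [_|_] := eqVneq mu b; rewrite /= ?sub0r ?oppr_eq0 ?oner_eq0 ?subrr ?eqxx.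
Qed.

Lemma lmon_binomial a b : lt b a ->
  lmon lt ('X_[a] - 'X_[b] : {mpoly K[n]}) = a /\
  lcoef lt ('X_[a] - 'X_[b] : {mpoly K[n]}) = 1.
Proof.
move=> lt_ba; have a_neq_b : a != b by apply: contraTneq lt_ba => ->; apply: term_ltxx lt_term _.
have lmonE : lmon lt ('X_[a] - 'X_[b] : {mpoly K[n]}) = a.
  apply: lmon_eq => [|nu]; rewrite msupp_binomial // !inE ?eqxx //.
  by case/orP=> /eqP->; [left|right].
by rewrite /lcoef lmonE mcoeffB !mcoeffX eqxx eq_sym (negbTE a_neq_b) subr0.
Qed.

End LeadingMonomial.

Section ReducedGroebnerUniq.
Variables (n : nat) (K : fieldType) (lt : rel 'X_{1..n}) (I : {mpoly K[n]} -> Prop).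
Hypothesis lt_term : term_order lt.
Implicit Types (G : seq {mpoly K[n]}) (g h : {mpoly K[n]}).

Lemma reduced_groebner_eq_mem G G' :
  G =i G' -> is_reduced_groebner lt I G' -> is_reduced_groebner lt I G.
Proof.
move=> eqG [[G'I G'lead] G'monic G'red]; split; first split.
- by move=> g; rewrite eqG; apply: G'I.
- by move=> f If f_neq0; have [g] := G'lead f If f_neq0; rewrite -eqG; exists g.
- by move=> g; rewrite eqG; apply: G'monic.
- by move=> g g'; rewrite !eqG; apply: G'red.
Qed.

Lemma reduced_groebner_tail_not_lmon G g mu h :
  is_reduced_groebner lt I G -> g \in G -> mu \in msupp g -> mu != lmon lt g ->
  I h -> h != 0 -> lmon lt h != mu.
Proof.
move=> [[_ Glead] _ Gred] gG mu_g mu_neq Ih h_neq0; apply/eqP => lmon_h.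
have [g' g'G /andP [_ g'_h]] := Glead h Ih h_neq0; rewrite lmon_h in g'_h.
have [eq_g'|neq_g'] := eqVneq g' g; last by move: (Gred _ _ g'G gG neq_g' mu mu_g); rewrite g'_h.
rewrite eq_g' in g'_h; have [eq_mu|lt_mu] := msupp_le_lmon lt_term mu_g.
  by rewrite eq_mu eqxx in mu_neq.
have [eq_mu|lt_g] := lem_term_le lt_term g'_h; first by rewrite eq_mu eqxx in mu_neq.
by move: (term_lt_asym lt_term lt_mu); rewrite lt_g.
Qed.

Lemma reduced_groebner_lmon_mem G G' g :
  is_reduced_groebner lt I G -> is_reduced_groebner lt I G' -> g \in G ->
  exists2 g', g' \in G' & lmon lt g' = lmon lt g.
Proof.
move=> [[GI Glead] Gmonic Gred] [[G'I G'lead] _ _] gG.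
have g_neq0 : g != 0 by apply: lcoef_eq1_neq0; apply: Gmonic.
have [g' g'G' /andP [g'_neq0 g'_g]] := G'lead g (GI g gG) g_neq0.
have [g'' g''G /andP [_ g''_g']] := Glead g' (G'I g' g'G') g'_neq0.
have eq_g'' : g'' = g.
  apply/eqP; apply: contraT => neq_g''.
  have := Gred g'' g g''G gG neq_g'' _ (lmon_msupp lt_term g_neq0).
  by rewrite (lepm_trans g''_g' g'_g).
by exists g' => //; apply: lem_anti => //; rewrite -eq_g''.
Qed.

Hypothesis I_sub : forall p q, I p -> I q -> I (p - q).

Lemma reduced_groebner_sub G G' :
  is_reduced_groebner lt I G -> is_reduced_groebner lt I G' -> {subset G <= G'}.
Proof.
move=> RG RG' g gG; have [g' g'G' eq_lmon] := reduced_groebner_lmon_mem RG RG' gG.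
have [->//|neq_g'] := eqVneq g g'; have h_neq0 : g - g' != 0 by rewrite subr_eq0.
have [[GI _] monicG _] := RG; have [[G'I _] monicG' _] := RG'.
have Ih : I (g - g') by apply: I_sub; [apply: GI | apply: G'I].
have lmon_neq : lmon lt (g - g') != lmon lt g.
  have coef_g : g@_(lmon lt g) = 1 by apply: monicG.
  have coef_g' : g'@_(lmon lt g) = 1 by rewrite -eq_lmon; apply: monicG'.
  apply: contraTneq (lmon_msupp lt_term h_neq0) => ->.
  by rewrite mcoeff_msupp mcoeffB coef_g coef_g' subrr eqxx.
move/msuppB_le: (lmon_msupp lt_term h_neq0); rewrite mem_cat => /orP[in_g|in_g'].
  by move: (reduced_groebner_tail_not_lmon RG gG in_g lmon_neq Ih h_neq0); rewrite eqxx.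
rewrite -eq_lmon in lmon_neq.
by move: (reduced_groebner_tail_not_lmon RG' g'G' in_g' lmon_neq Ih h_neq0); rewrite eqxx.
Qed.

Lemma reduced_groebner_uniq G G' :
  is_reduced_groebner lt I G -> is_reduced_groebner lt I G' -> G =i G'.
Proof.
by move=> RG RG' g; apply/idP/idP; apply: reduced_groebner_sub.
Qed.

End ReducedGroebnerUniq.

Section BinomialIdeal.
Variables (n : nat) (K : fieldType).
Implicit Types (p q : {mpoly K[n]}) (gens : seq {mpoly K[n]}) (mu : 'X_{1..n}).

Lemma in_idealB gens p q : in_ideal gens p -> in_ideal gens q -> in_ideal gens (p - q).
Proof.
case=> cp [size_cp ->] [cq [size_cq ->]].
exists [seq cp`_k - cq`_k | k <- iota 0 (size gens)]; split.
  by rewrite size_map size_iota.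
rewrite -sumrB; apply: eq_bigr => k _.
by rewrite (nth_map 0%N) ?size_iota // nth_iota // mulrBl.
Qed.

Lemma in_idealZ gens g c : g \in gens -> in_ideal gens (c *: g).
Proof.
move=> g_gens; have gi_lt : (index g gens < size gens)%N by rewrite index_mem.
exists [seq (if k == index g gens then c%:MP else 0) | k <- iota 0 (size gens)].
split; first by rewrite size_map size_iota.
rewrite (bigD1 (Ordinal gi_lt)) //= big1 ?addr0.
  by rewrite (nth_map 0%N) ?size_iota // nth_iota // eqxx nth_index // mul_mpolyC.
move=> k; rewrite -val_eqE (nth_map 0%N) ?size_iota // nth_iota //= => /negbTE->.
by rewrite mul0r.
Qed.

Definition coefsum (P : pred 'X_{1..n}) p : K := \sum_(mu <- msupp p | P mu) p@_mu.

Section CoefSum.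
Variable P : pred 'X_{1..n}.

Lemma coefsumwE k p : (msize p <= k)%N ->
  coefsum P p = \sum_(mu : 'X_{1..n < k} | P mu) p@_mu.
Proof.
move=> p_le_k; pose I : subFinType _ := 'X_{1..n < k}.
rewrite /coefsum (big_mksub_cond I) ?msupp_uniq //=; last first.
  by move=> mu /msize_mdeg_lt /leq_trans /(_ p_le_k) ->.
rewrite -big_filter_cond big_rmcond ?big_filter //=.
by move=> mu /memN_msupp_eq0 ->.
Qed.

Lemma coefsum_is_linear : linear_for *%R (coefsum P).
Proof.
move=> c p q /=; pose_big_enough k.
  rewrite !(coefsumwE (k := k)) // mulr_sumr -big_split /=.
  by apply: eq_bigr => mu _; rewrite mcoeffD mcoeffZ.
by close.
Qed.

HB.instance Definition _ :=
  GRing.isLinear.Build K {mpoly K[n]} K *%R (coefsum P) coefsum_is_linear.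

Lemma coefsumZ c p : coefsum P (c *: p) = c * coefsum P p.
Proof. exact: linearZ_LR. Qed.

Lemma coefsumX mu : coefsum P 'X_[mu] = (P mu)%:R.
Proof. by rewrite /coefsum msuppX big_mkcond big_seq1 mcoeffX eqxx; case: (P mu). Qed.

Lemma coefsum_single p mu : mu \in msupp p -> P mu ->
  (forall nu, nu \in msupp p -> P nu -> nu = mu) -> coefsum P p = p@_mu.
Proof.
move=> mu_p P_mu mu_uniq; rewrite /coefsum -big_filter.
rewrite (bigD1_seq mu) ?filter_uniq ?msupp_uniq ?mem_filter ?P_mu //=.
rewrite big1_seq ?addr0 // => nu /andP[nu_neq]; rewrite mem_filter => /andP[P_nu nu_p].
by rewrite (mu_uniq nu nu_p P_nu) eqxx in nu_neq.
Qed.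

End CoefSum.

Section KeyBalanced.
Variables (T : eqType) (key : 'X_{1..n} -> T).

Definition key_balanced (a b : 'X_{1..n}) := forall nu, key (nu + a)%MM = key (nu + b)%MM.

Lemma coefsum_mul_binomial a b c v : key_balanced a b ->
  coefsum [pred mu | key mu == v] (c * ('X_[a] - 'X_[b])) = 0.
Proof.
move=> ab; rewrite {1}[c]mpolyE mulr_suml raddf_sum big1 // => nu _.
by rewrite -scalerAl mulrBr -!mpolyXD /= coefsumZ raddfB /= !coefsumX /= ab subrr mulr0.
Qed.

Lemma in_ideal_coefsum_eq0 gens p v :
  (forall g, g \in gens -> exists a b, key_balanced a b /\ g = 'X_[a] - 'X_[b]) ->
  in_ideal gens p -> coefsum [pred mu | key mu == v] p = 0.
Proof.
move=> gens_bin [cs [_ ->]]; rewrite raddf_sum big1 // => k _.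
have [a [b [ab ->]]] := gens_bin _ (mem_nth 0 (ltn_ord k)).
exact: coefsum_mul_binomial.
Qed.

End KeyBalanced.
End BinomialIdeal.

Lemma det_mx2 (R : comNzRingType) (A : 'M[R]_2) :
  \det A = A 0 0 * A 1 1 - A 0 1 * A 1 0.
Proof.
rewrite (expand_det_row _ 0) !big_ord_recl big_ord0 addr0.
rewrite /cofactor !det_mx11 !mxE /= expr0 expr1 mul1r mulN1r mulrN.
by congr (_ * A _ _ - A _ _ * A _ _); apply/val_inj.
Qed.

Lemma sum_delta_nat m (a : 'I_m) (F : 'I_m -> nat) : (\sum_k (a == k) * F k = F a)%N.
Proof.
rewrite (bigD1 a) //= eqxx mul1n big1 ?addn0 // => k.
by rewrite eq_sym => /negbTE ->.
Qed.

Lemma eq_leq_sum m (F G : 'I_m -> nat) :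
  (forall k, F k <= G k)%N -> (\sum_k F k = \sum_k G k)%N -> F =1 G.
Proof.
move=> le_FG eq_sum k; apply/eqP; rewrite eqn_leq le_FG /= -subn_eq0.
have : (\sum_k F k + \sum_k (G k - F k) = \sum_k F k + 0)%N.
  by rewrite addn0 -big_split /= eq_sum; apply: eq_bigr => i _; rewrite subnKC.
by move/addnI/eqP; rewrite sum_nat_eq0 => /forallP /(_ k).
Qed.


Section CrossMonomials.
Variables (m : nat) (d : 'I_m -> nat).
Hypothesis d_gt0 : forall i, (0 < d i)%N.
Implicit Types (a b : 'I_m) (mu nu : 'X_{1..m + m}).

(* the exponent of [x_a^(d a) * y_b^(d b)] *)
Definition cross a b : 'X_{1..m + m} :=
  (U_(lshift m a) *+ d a + U_(rshift m b) *+ d b)%MM.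

Lemma cross_lshift a b k : cross a b (lshift m k) = ((a == k) * d k)%N.
Proof. by rewrite mnmDE !mulmnE !mnm1E !eq_shift addn0; case: eqP => [->|]. Qed.

Lemma cross_rshift a b k : cross a b (rshift m k) = ((b == k) * d k)%N.
Proof. by rewrite mnmDE !mulmnE !mnm1E !eq_shift add0n; case: eqP => [->|]. Qed.

Lemma lem_cross a b mu :
  lem (cross a b) mu = (d a <= mu (lshift m a))%N && (d b <= mu (rshift m b))%N.
Proof.
apply/mnm_lepP/andP => [le_mu | [le_a le_b] t].
  by have := le_mu (lshift m a); have := le_mu (rshift m b);
    rewrite cross_lshift cross_rshift !eqxx !mul1n.
case: (split_ordP t) => k ->.
  by rewrite cross_lshift; have [<-|_] := eqVneq a k; rewrite ?mul1n.
by rewrite cross_rshift; have [<-|_] := eqVneq b k; rewrite ?mul1n.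
Qed.

Lemma lem_cross_inj a b a' b' : lem (cross a b) (cross a' b') -> a = a' /\ b = b'.
Proof.
rewrite lem_cross cross_lshift cross_rshift => /andP[le_a le_b].
have eq_of_le i j : (d i <= (j == i) * d i)%N -> j = i.
  by case: eqVneq => [//|_]; rewrite mul0n leqn0 => /eqP d0; move: (d_gt0 i); rewrite d0.
by split; apply/esym/eq_of_le.
Qed.

Lemma cross_swap_neq a b : a != b -> cross a b != cross b a.
Proof.
move=> neq_ab; apply/eqP => /(congr1 (fun mu : 'X_{1..m + m} => mu (lshift m a))).
rewrite !cross_lshift eqxx mul1n eq_sym (negbTE neq_ab) mul0n => /eqP.
by rewrite eqn0Ngt d_gt0.
Qed.

Lemma cross_exchange a b c : (cross b a + cross c b = cross c a + cross b b)%MM.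
Proof.
apply/mnmP => t; rewrite (mnmDE t (cross b a)) (mnmDE t (cross c a)).
by case: (split_ordP t) => k ->; rewrite ?cross_lshift ?cross_rshift // addnC.
Qed.

End CrossMonomials.

Section Fibers.
Variables (m : nat) (d : 'I_m -> nat).
Hypothesis d_gt0 : forall i, (0 < d i)%N.
Implicit Types (a b : 'I_m) (mu nu : 'X_{1..m + m}).
Local Notation cross := (cross d).

Definition xblocks mu k := (mu (lshift m k) %/ d k)%N.
Definition yblocks mu k := (mu (rshift m k) %/ d k)%N.

(* Exchanging [x_a^(d a) y_b^(d b)] for [x_b^(d b) y_a^(d a)] preserves the
   exponents modulo [d], the number of [d k]-blocks in each column [k] and the
   total number of x-blocks; [fiber] records exactly these data. *)
Definition fiber mu :=
  ([ffun k => (mu (lshift m k) %% d k, mu (rshift m k) %% d k,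
               xblocks mu k + yblocks mu k)%N],
   (\sum_k xblocks mu k)%N).

Lemma xblocksD_cross mu a b k : xblocks (mu + cross a b)%MM k = ((a == k) + xblocks mu k)%N.
Proof. by rewrite /xblocks mnmDE cross_lshift addnC divnMDl. Qed.

Lemma yblocksD_cross mu a b k : yblocks (mu + cross a b)%MM k = ((b == k) + yblocks mu k)%N.
Proof. by rewrite /yblocks mnmDE cross_rshift addnC divnMDl. Qed.

Lemma fiberD_cross_swap mu a b : fiber (mu + cross a b)%MM = fiber (mu + cross b a)%MM.
Proof.
have sum_x c e : (\sum_k xblocks (mu + cross c e)%MM k = (\sum_k xblocks mu k).+1)%N.
  under eq_bigr do rewrite xblocksD_cross.
  by rewrite big_split /= (bigD1 c) //= eqxx big1 // => k; rewrite eq_sym => /negbTE->.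
rewrite /fiber !sum_x; congr (_, _); apply/ffunP => k; rewrite !ffunE.
rewrite !(mnmDE _ mu) !cross_lshift !cross_rshift !xblocksD_cross !yblocksD_cross.
by rewrite !(addnC (mu _)) !modnMDl addnACA [in RHS]addnACA (addnC (a == k)).
Qed.

Lemma fiber_eq mu1 mu2 : fiber mu1 = fiber mu2 ->
  [/\ forall k, (mu1 (lshift m k) %% d k = mu2 (lshift m k) %% d k)%N,
      forall k, (mu1 (rshift m k) %% d k = mu2 (rshift m k) %% d k)%N,
      forall k, (xblocks mu1 k + yblocks mu1 k = xblocks mu2 k + yblocks mu2 k)%N
    & (\sum_k xblocks mu1 k = \sum_k xblocks mu2 k)%N].
Proof.
case=> /ffunP eq_k eq_sum.
by split=> // k; have := eq_k k; rewrite !ffunE => -[].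
Qed.

Lemma eq_mnm_blocks mu1 mu2 :
  (forall k, mu1 (lshift m k) %% d k = mu2 (lshift m k) %% d k)%N ->
  (forall k, mu1 (rshift m k) %% d k = mu2 (rshift m k) %% d k)%N ->
  xblocks mu1 =1 xblocks mu2 -> yblocks mu1 =1 yblocks mu2 -> mu1 = mu2.
Proof.
move=> eq_rx eq_ry eq_x eq_y; apply/mnmP => t.
case: (split_ordP t) => k ->; rewrite (divn_eq (mu1 _) (d k)) (divn_eq (mu2 _) (d k)).
  by rewrite eq_rx -/(xblocks _ _) -/(xblocks _ _) eq_x.
by rewrite eq_ry -/(yblocks _ _) -/(yblocks _ _) eq_y.
Qed.

Lemma lem_cross_blocks a b mu :
  lem (cross a b) mu = (0 < xblocks mu a)%N && (0 < yblocks mu b)%N.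
Proof. by rewrite lem_cross /xblocks /yblocks !divn_gt0. Qed.

End Fibers.

Section StandardMonomials.
Variables (m : nat) (d : 'I_m -> nat) (lt : rel 'X_{1..m + m}).
Hypothesis d_gt0 : forall i, (0 < d i)%N.
Hypothesis lt_term : term_order lt.
Implicit Types (a b : 'I_m) (mu nu : 'X_{1..m + m}).
Local Notation cross := (cross d).
Local Notation fiber := (fiber d).
Local Notation xblocks := (xblocks d).
Local Notation yblocks := (yblocks d).

Definition leads a b := lt (cross b a) (cross a b).

Lemma leads_neq a b : leads a b -> a != b.
Proof. by apply: contraTneq => ->; apply: term_ltxx. Qed.

Lemma leads_total a b : a != b -> leads a b || leads b a.
Proof. by move=> neq_ab; rewrite orbC; apply/term_lt_total/cross_swap_neq. Qed.

Lemma leads_trans a b c : leads a b -> leads b c -> leads a c.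
Proof.
move=> ab bc; rewrite /leads -(term_ltD2r lt_term (cross b b)).
rewrite -cross_exchange -[(cross a c + _)%MM]cross_exchange.
apply: (term_lt_trans lt_term (b := (cross a b + cross c b)%MM)); first by rewrite term_ltD2r.
by rewrite (addmC (cross a b)) term_ltD2r.
Qed.

Definition lead_rank a := #|[pred b | leads a b]|.

Lemma lead_rank_lt a b : leads a b -> (lead_rank b < lead_rank a)%N.
Proof.
move=> ab; apply/proper_card/properP; split.
  by apply/subsetP => c; rewrite !inE; apply: leads_trans.
by exists b; rewrite !inE //; apply: term_ltxx.
Qed.

Definition potential mu := (\sum_k xblocks mu k * lead_rank k)%N.

Lemma potentialD_cross mu a b : potential (mu + cross a b)%MM = (lead_rank a + potential mu)%N.
Proof.
rewrite /potential; under eq_bigr do rewrite xblocksD_cross // mulnDl.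
by rewrite big_split /= sum_delta_nat.
Qed.

Definition standard mu := [forall a, forall b, leads a b ==> ~~ lem (cross a b) mu].

Lemma standardPn mu : ~~ standard mu -> exists a b, leads a b /\ lem (cross a b) mu.
Proof.
case/forallPn => a /forallPn [b]; rewrite negb_imply negbK => /andP[ab ab_mu].
by exists a, b.
Qed.

Lemma standard_no_exchange mu1 mu2 a b : standard mu1 -> standard mu2 -> a != b ->
  lem (cross a b) mu1 -> lem (cross b a) mu2 -> False.
Proof.
move=> std1 std2 neq_ab ab_mu1 ba_mu2.
have /implyP/(_ _)/negP not_ab := forallP (forallP std1 a) b.
have /implyP/(_ _)/negP not_ba := forallP (forallP std2 b) a.
by case/orP: (leads_total neq_ab) => [/not_ab|/not_ba].
Qed.

Lemma standard_fiber_uniq mu1 mu2 :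
  standard mu1 -> standard mu2 -> fiber mu1 = fiber mu2 -> mu1 = mu2.
Proof.
move=> std1 std2 /fiber_eq[eq_rx eq_ry eq_blocks eq_sum].
have no_cross i j : (xblocks mu2 i < xblocks mu1 i)%N -> (xblocks mu1 j < xblocks mu2 j)%N -> False.
  move=> lt_i lt_j; have neq_ij : i != j by apply: contraTneq lt_i => ->; rewrite -leqNgt ltnW.
  have := eq_blocks i; have := eq_blocks j => eq_j eq_i.
  apply: (standard_no_exchange std1 std2 neq_ij); rewrite lem_cross_blocks //; apply/andP; lia.
have eq_x : xblocks mu1 =1 xblocks mu2.
  have [/existsP[i lt_i]|/existsPn ge_x] := boolP [exists i, xblocks mu2 i < xblocks mu1 i]%N.
    have le_x k : (xblocks mu2 k <= xblocks mu1 k)%N.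
      by rewrite leqNgt; apply/negP => /(no_cross i k lt_i).
    by move: lt_i; rewrite (eq_leq_sum le_x (esym eq_sum)) ltnn.
  by apply: eq_leq_sum eq_sum => k; rewrite leqNgt ge_x.
apply: eq_mnm_blocks => // k; have := eq_blocks k; rewrite eq_x; lia.
Qed.

Lemma standard_fiber_min mu0 mu : standard mu0 -> fiber mu0 = fiber mu ->
  mu0 = mu \/ lt mu0 mu.
Proof.
move=> std0; have [N] := ubnP (potential mu); elim: N mu => // N IH mu.
move=> pot_mu fiber_mu; have [std_mu|/standardPn[a [b [ab ab_mu]]]] := boolP (standard mu).
  by left; apply: standard_fiber_uniq.
pose nu := (mu - cross a b)%MM; have mu_nu : mu = (nu + cross a b)%MM by rewrite submK.
have lt_mu : lt (nu + cross b a)%MM mu by rewrite mu_nu !(addmC nu) term_ltD2r.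
have [->|lt_mu0] : mu0 = (nu + cross b a)%MM \/ lt mu0 (nu + cross b a)%MM.
- apply: IH; last by rewrite fiber_mu mu_nu fiberD_cross_swap.
  by move: pot_mu; rewrite mu_nu !potentialD_cross; have := lead_rank_lt ab; lia.
- by right.
- by right; apply: term_lt_trans lt_mu0 lt_mu.
Qed.

End StandardMonomials.

Section DeterminantalIdeal.
Variables (m : nat) (K : fieldType) (d : 'I_m -> nat) (lt : rel 'X_{1..m + m}).
Hypothesis d_gt0 : forall i, (0 < d i)%N.
Hypothesis lt_term : term_order lt.
Implicit Types (a b : 'I_m) (f g : {mpoly K[m + m]}).
Local Notation cross := (cross d).
Local Notation leads := (leads d lt).
Local Notation fij := (fij K d).
Local Notation fij_monic := (fij_monic K d lt).

Lemma fij_binomial a b : fij a b = 'X_[cross a b] - 'X_[cross b a].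
Proof. by rewrite /fij /xv /yv !mpolyXn -!mpolyXD. Qed.

Lemma minor2_fij a b : minor2 K d a b = fij a b.
Proof. by rewrite /minor2 det_mx2 !mxE. Qed.

Lemma mem_pairs_lt a b :
  (a, b) \in [seq ij : 'I_m * 'I_m <- [seq (i, j) | i <- enum 'I_m, j <- enum 'I_m]
             | (ij.1 < ij.2)%N] = (a < b)%N.
Proof. by rewrite mem_filter /= andb_idr // => _; apply/allpairsP; exists (a, b); rewrite !mem_enum. Qed.

Lemma minors2_binomial g : g \in minors2 K d ->
  exists mu nu, key_balanced (fiber d) mu nu /\ g = 'X_[mu] - 'X_[nu].
Proof.
case/mapP => -[a b] _ ->; exists (cross a b), (cross b a).
by rewrite minor2_fij fij_binomial; split=> // nu; apply: fiberD_cross_swap.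
Qed.

Lemma lmon_not_standard f : I2D d f -> f != 0 -> ~~ standard d lt (lmon lt f).
Proof.
move=> If f_neq0; apply/negP => std_f.
have lmon_f := lmon_msupp lt_term f_neq0.
have := in_ideal_coefsum_eq0 (fiber d (lmon lt f)) minors2_binomial If.
rewrite (coefsum_single (mu := lmon lt f)) ?inE ?eqxx //; first by apply/eqP; rewrite -mcoeff_msupp.
move=> mu mu_f /eqP /esym /(standard_fiber_min d_gt0 lt_term std_f) [->//|lt_mu].
case: (msupp_le_lmon lt_term mu_f) => [//|lt_lmon].
by move: (term_lt_asym lt_term lt_mu); rewrite lt_lmon.
Qed.

Lemma lmon_fij a b : leads a b -> lmon lt (fij a b) = cross a b /\ lcoef lt (fij a b) = 1.
Proof. by move=> ab; rewrite fij_binomial; apply: lmon_binomial. Qed.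

Lemma fij_monic_leads a b : leads a b -> fij_monic a b = fij a b.
Proof. by move=> /lmon_fij[_ lcoef1]; rewrite /fij_monic lcoef1 invr1 scale1r. Qed.

Lemma fij_monicC a b : fij_monic b a = fij_monic a b.
Proof.
have fijC : fij b a = - fij a b by rewrite !fij_binomial opprB.
by rewrite /fij_monic fijC (lcoefN lt_term) invrN scaleNr scalerN opprK.
Qed.

Lemma GsetP g : reflect (exists a b, leads a b /\ g = fij a b) (g \in Gset K d lt).
Proof.
apply: (iffP mapP) => [[[a b] ab_pairs ->] | [a [b [ab ->]]]].
  have neq_ab : a != b by apply: contraTneq ab_pairs => ->; rewrite mem_pairs_lt ltnn.
  case/orP: (leads_total d_gt0 lt_term neq_ab) => [ab|ba]; first by exists a, b; rewrite fij_monic_leads.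
  by exists b, a; rewrite /= fij_monicC fij_monic_leads.
rewrite -fij_monic_leads //; case: (ltngtP a b) => [lt_ab|lt_ba|/val_inj eq_ab].
- by exists (a, b); rewrite ?mem_pairs_lt.
- by exists (b, a); [rewrite mem_pairs_lt | rewrite /= fij_monicC].
- by move: (leads_neq lt_term ab); rewrite eq_ab eqxx.
Qed.

Lemma Gset_in_ideal g : g \in Gset K d lt -> I2D d g.
Proof.
case/mapP => -[a b]; rewrite mem_pairs_lt => lt_ab ->.
rewrite /fij_monic -minor2_fij; apply: in_idealZ.
by apply/mapP; exists (a, b); rewrite ?mem_pairs_lt.
Qed.

Lemma Gset_reduced : is_reduced_groebner lt (I2D d) (Gset K d lt).
Proof.
split; first split.
- exact: Gset_in_ideal.
- move=> f If f_neq0; have [a [b [ab ab_f]]] := standardPn (lmon_not_standard If f_neq0).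
  have [lmon_ab lcoef_ab] := lmon_fij ab.
  exists (fij a b); first by apply/GsetP; exists a, b.
  by rewrite (lcoef_eq1_neq0 lcoef_ab) lmon_ab.
- by move=> g /GsetP[a [b [ab ->]]]; case: (lmon_fij ab).
- move=> g g' /GsetP[a [b [ab ->]]] /GsetP[a' [b' [ab' ->]]] neq_g mu.
  rewrite fij_binomial msupp_binomial ?cross_swap_neq ?(leads_neq lt_term ab') // (lmon_fij ab).1 !inE.
  case/orP => /eqP-> ; apply/negP => /(lem_cross_inj d_gt0) [eq_a eq_b]; subst a' b'.
  + by rewrite eqxx in neq_g.
  + by case/negP: (term_lt_asym lt_term ab).
Qed.

End DeterminantalIdeal.

Theorem theorem4p1 (K : fieldType) (m : nat) (d : 'I_m -> nat)
    (lt : rel 'X_{1..m + m}) :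
  (2 <= m)%N -> (forall i, (0 < d i)%N) -> term_order lt ->
  forall G : seq {mpoly K[m + m]},
    is_reduced_groebner lt (@I2D m K d) G <-> G =i @Gset m K d lt.
Proof.
move=> _ d_gt0 lt_term G.
have I2D_sub (p q : {mpoly K[m + m]}) : I2D d p -> I2D d q -> I2D d (p - q) by apply: in_idealB.
have Gset_red := Gset_reduced K d_gt0 lt_term.
split=> [G_red | eq_G]; first exact: (reduced_groebner_uniq lt_term I2D_sub G_red Gset_red).
exact: reduced_groebner_eq_mem eq_G Gset_red.
Qed.
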